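(* Let $Y$ be a compact metric ANR with metric $d$ and let $A\subseteq Y$ be a $\mathcal{Z}$-set. Equip $A\times[0,1]$ with the metric $\rho((z,s),(z',s'))=\max\{d(z,z'),|s-s'|\}$. Then for every $\epsilon>0$ there exist $\delta'>0$ and a continuous map $F: A\times[0,1]\to Y$ that is a $\delta'$-$\epsilon$-map.
   Context: A closed subset $A$ of an ANR $Y$ is a $\mathcal{Z}$-set if there exists a homotopy $H: Y\times[0,1]\to Y$ with $H_0=\mathrm{id}_Y$ and $H_t(Y)\subseteq Y-A$ for all $t>0$. A map $f:X\to Y$ between metric spaces is a $\delta$-$\epsilon$-map if for every subset $S\subseteq Y$ of diameter $\le\delta$, $f^{-1}(S)$ has diameter $\le\epsilon$. *)

From Stdlib Require Export Reals List.
Open Scope R_scope.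

Definition is_metric {X : Type} (d : X -> X -> R) : Prop :=
  (forall x y, 0 <= d x y) /\
  (forall x y, d x y = 0 <-> x = y) /\
  (forall x y, d x y = d y x) /\
  (forall x y z, d x z <= d x y + d y z).

Definition open_set {X : Type} (d : X -> X -> R) (U : X -> Prop) : Prop :=
  forall x, U x -> exists r, 0 < r /\ forall y, d x y < r -> U y.

Definition closed_set {X : Type} (d : X -> X -> R) (C : X -> Prop) : Prop :=
  open_set d (fun x => ~ C x).

Definition compact_space {X : Type} (d : X -> X -> R) : Prop :=
  forall (I : Type) (U : I -> X -> Prop),
    (forall i, open_set d (U i)) ->
    (forall x, exists i, U i x) ->
    exists l : list I, forall x, exists i, In i l /\ U i x.

Definition continuous_on {X Y : Type} (dX : X -> X -> R) (dY : Y -> Y -> R)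
  (D : X -> Prop) (f : X -> Y) : Prop :=
  forall x, D x -> forall eps, 0 < eps -> exists delta, 0 < delta /\
    forall x', D x' -> dX x x' < delta -> dY (f x) (f x') < eps.

Definition closed_embedding {Y M : Type} (dY : Y -> Y -> R) (dM : M -> M -> R)
  (e : Y -> M) : Prop :=
  continuous_on dY dM (fun _ => True) e /\
  (forall y y', e y = e y' -> y = y') /\
  (forall y eps, 0 < eps -> exists delta, 0 < delta /\
     forall y', dM (e y) (e y') < delta -> dY y y' < eps) /\
  closed_set dM (fun m => exists y, e y = m).

Definition ANR {Y : Type} (d : Y -> Y -> R) : Prop :=
  is_metric d /\
  forall (M : Type) (dM : M -> M -> R) (e : Y -> M),
    is_metric dM -> closed_embedding d dM e ->
    exists (U : M -> Prop) (r : M -> Y),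
      open_set dM U /\ (forall y, U (e y)) /\
      continuous_on dM d U r /\ (forall y, r (e y) = y).

Definition rho {X : Type} (d : X -> X -> R) (p q : X * R) : R :=
  Rmax (d (fst p) (fst q)) (Rabs (snd p - snd q)).

Definition unit_interval (t : R) : Prop := 0 <= t <= 1.

Definition Z_set {Y : Type} (d : Y -> Y -> R) (A : Y -> Prop) : Prop :=
  closed_set d A /\
  exists H : Y * R -> Y,
    continuous_on (rho d) d (fun p => unit_interval (snd p)) H /\
    (forall y, H (y, 0) = y) /\
    (forall y t, 0 < t <= 1 -> ~ A (H (y, t))).

Definition delta_eps_map {X Y : Type} (dX : X -> X -> R) (dY : Y -> Y -> R)
  (D : X -> Prop) (f : X -> Y) (delta eps : R) : Prop :=
  forall S : Y -> Prop,
    (forall p q, S p -> S q -> dY p q <= delta) ->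
    forall x x', D x -> D x' -> S (f x) -> S (f x') -> dX x x' <= eps.

From Pilot Require Import Defs.
From Stdlib Require Import Reals.
From Stdlib Require Import Lra Lia List Classical.
Open Scope R_scope.

(* Let H : Y x [0,1] -> Y witness that A is a Z-set (H_0 = id, H_t misses A
   for t > 0).  The map is F(z,s) = H(z, phi(s)) for a continuous increasing
   reparametrisation phi : [0,1] -> (0, tau] of the time variable:
   - compactness makes H uniformly close to the identity for t <= tau, so
     F(z,s) is eps/4-close to z;
   - compactness (of Y and of [a,1]) also shows that H(A x [0,b]) and
     H(Y x [a,1]) are at positive distance for some 0 < b <= a; iterating
     gives levels tau = c_0 >= c_1 >= ... >= c_n with a common gap g between
     H(A x [0,c_(m+1)]) and H(Y x [c_m,1]);
   - phi(s) is the piecewise-linear interpolation of the levels at the points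
     s = m/n; for n > 2/eps, times more than eps apart are split by two
     consecutive levels, so their images are at least g apart.
   Closeness to z controls the A-coordinate, the gap controls the time
   coordinate, and F is a delta'-eps-map for delta' = min(eps/2, g/2). *)

Lemma list_positive_lower_bound (I : Type) (f : I -> R) (l : list I) :
  (forall i, In i l -> 0 < f i) ->
  exists m, 0 < m /\ forall i, In i l -> m <= f i.
Proof.
  induction l as [|a l IH]; intros Hpos.
  - exists 1; split; [lra | intros i []].
  - destruct IH as [m [Hm Hle]]; [intros i Hi; apply Hpos; right; exact Hi|].
    pose proof (Hpos a (or_introl eq_refl)) as Ha.
    exists (Rmin m (f a)); split; [apply Rmin_pos; lra|].
    intros i [<- | Hi]; [apply Rmin_r|].
    eapply Rle_trans; [apply Rmin_l | apply Hle, Hi].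
Qed.

Lemma rho_lt (Y : Type) (d : Y -> Y -> R) (y y' : Y) (s s' r : R) :
  d y y' < r -> Rabs (s - s') < r -> rho d (y, s) (y', s') < r.
Proof. intros; unfold rho; simpl; apply Rmax_lub_lt; assumption. Qed.

Section UniformRadius.
Variables (X : Type) (d : X -> X -> R).
Hypothesis d_self : forall x, d x x = 0.
Hypothesis d_triangle : forall x y z, d x z <= d x y + d y z.

Lemma ball_open (x : X) (r : R) : Defs.open_set d (fun w => d x w < r).
Proof.
  intros w Hw; exists (r - d x w); split; [lra|].
  intros w' Hw'; pose proof (d_triangle x w w'); lra.
Qed.

(* Lebesgue-number principle: on a compact (pseudo)metric space, a property
   Q x r that holds on a ball around every point, with the radius of that
   ball, and that survives shrinking r, holds with a single radius. *)
Lemma compact_uniform_radius (Q : X -> R -> Prop) :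
  compact_space d ->
  (forall x r r', 0 < r' <= r -> Q x r -> Q x r') ->
  (forall x, exists r, 0 < r /\ forall x', d x x' < r -> Q x' r) ->
  exists m, 0 < m /\ forall x, Q x m.
Proof.
  intros Hc Hmono Hloc.
  set (I := {p : X * R | 0 < snd p /\ forall x', d (fst p) x' < snd p -> Q x' (snd p)}).
  set (radius := fun i : I => snd (proj1_sig i)).
  destruct (Hc I (fun i w => d (fst (proj1_sig i)) w < radius i)) as [l Hl].
  - intros i; apply ball_open.
  - intros x; destruct (Hloc x) as [r [Hr Hx]].
    exists (exist _ (x, r) (conj Hr Hx)); unfold radius; simpl.
    rewrite d_self; exact Hr.
  - destruct (list_positive_lower_bound I radius l) as [m [Hm Hle]].
    { intros i _; exact (proj1 (proj2_sig i)). }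
    exists m; split; [exact Hm|]; intros x.
    destruct (Hl x) as [[[y r] [Hr Hy]] [Hin Hx]].
    apply (Hmono x r m); [split; [exact Hm | apply (Hle _ Hin)] | apply Hy, Hx].
Qed.
End UniformRadius.

Definition interval_dist (a b : R) (x y : {t : R | a <= t <= b}) : R :=
  Rabs (proj1_sig x - proj1_sig y).

Lemma interval_dist_self (a b : R) (x : {t : R | a <= t <= b}) : interval_dist a b x x = 0.
Proof. unfold interval_dist; replace (_ - _) with 0 by ring; apply Rabs_R0. Qed.

Lemma interval_dist_triangle (a b : R) (x y z : {t : R | a <= t <= b}) :
  interval_dist a b x z <= interval_dist a b x y + interval_dist a b y z.
Proof.
  unfold interval_dist.
  replace (proj1_sig x - proj1_sig z)
    with ((proj1_sig x - proj1_sig y) + (proj1_sig y - proj1_sig z)) by ring.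
  apply Rabs_triang.
Qed.

(* Heine-Borel for [a,b]: the supremum of the points up to which [a,_] has a
   finite subcover is b, since a cover element around it reaches past it. *)
Lemma interval_compact (a b : R) : compact_space (interval_dist a b).
Proof.
  intros I U Hopen Hcover.
  destruct (Rle_dec a b) as [Hab | Hab]; [| exists nil; intros [t Ht]; exfalso; lra].
  set (covered := fun x => exists l : list I, forall t (Ht : a <= t <= b),
         t <= x -> exists i, In i l /\ U i (exist _ t Ht)).
  set (E := fun x => a <= x <= b /\ covered x).
  assert (Ea : E a).
  { destruct (Hcover (exist _ a (conj (Rle_refl a) Hab))) as [i Hi].
    split; [lra|]; exists (i :: nil); intros t Ht Hta.
    exists i; split; [left; reflexivity|].
    assert (t = a) by lra; subst t.
    replace Ht with (conj (Rle_refl a) Hab) by apply proof_irrelevance; exact Hi. }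
  destruct (completeness E) as [s [Hub Hlub]];
    [exists b; intros x [Hx _]; lra | exists a; exact Ea |].
  assert (Has : a <= s) by (apply Hub, Ea).
  assert (Hsb : s <= b) by (apply Hlub; intros x [Hx _]; lra).
  destruct (Hcover (exist _ s (conj Has Hsb))) as [is His].
  destruct (Hopen is _ His) as [r [Hr Hball]].
  assert (Hnear : exists x, E x /\ s - r < x).
  { apply NNPP; intros Hno.
    assert (s <= s - r); [|lra].
    apply Hlub; intros x Ex; apply Rnot_lt_le; intros Hlt; apply Hno; exists x; auto. }
  destruct Hnear as [x [[Hx [l Hl]] Hxs]].
  set (y := Rmin (s + r / 2) b).
  assert (Ey : E y).
  { split; [split; [apply Rmin_glb; lra | apply Rmin_r]|].
    exists (is :: l); intros t Ht Hty.
    destruct (Rle_dec t x) as [Htx | Htx].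
    - destruct (Hl t Ht Htx) as [i [Hi Ui]]; exists i; split; [right|]; assumption.
    - exists is; split; [left; reflexivity|]; apply Hball; unfold interval_dist; simpl.
      assert (t <= s + r / 2) by (eapply Rle_trans; [exact Hty | apply Rmin_l]).
      apply Rabs_def1; lra. }
  assert (Hyb : y = b).
  { pose proof (Hub y Ey); unfold y, Rmin in *; destruct Rle_dec; lra. }
  destruct Ey as [_ [l' Hl']]; rewrite Hyb in Hl'.
  exists l'; intros [t Ht]; apply Hl'; lra.
Qed.

Definition separated {Y : Type} (d : Y -> Y -> R) (A : Y -> Prop) (H : Y * R -> Y)
  (lo hi g : R) : Prop :=
  forall z y t t', A z -> 0 <= t <= lo -> hi <= t' <= 1 -> g <= d (H (z, t)) (H (y, t')).

Lemma separated_weaken {Y : Type} (d : Y -> Y -> R) (A : Y -> Prop) (H : Y * R -> Y)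
  (lo hi g g' : R) : g' <= g -> separated d A H lo hi g -> separated d A H lo hi g'.
Proof. intros Hg Hsep z y t t' Az Ht Ht'; eapply Rle_trans; [exact Hg | apply Hsep; assumption]. Qed.

Section Homotopy.
Variables (Y : Type) (d : Y -> Y -> R) (H : Y * R -> Y).
Hypothesis d_metric : is_metric d.
Hypothesis Y_compact : compact_space d.
Hypothesis H_cont : continuous_on (rho d) d (fun p => unit_interval (snd p)) H.
Hypothesis H_start : forall y, H (y, 0) = y.

Let d_self : forall y, d y y = 0 := fun y => proj2 (proj1 (proj2 d_metric) y y) eq_refl.
Let d_sym : forall x y, d x y = d y x := proj1 (proj2 (proj2 d_metric)).
Let d_tri : forall x y z, d x z <= d x y + d y z := proj2 (proj2 (proj2 d_metric)).

Lemma homotopy_near_identity (al : R) : 0 < al ->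
  exists tau, 0 < tau <= 1 /\ forall y t, 0 <= t <= tau -> d (H (y, t)) y < al.
Proof.
  intros Hal.
  destruct (compact_uniform_radius Y d d_self d_tri
    (fun y r => forall t, 0 <= t < r -> t <= 1 -> d (H (y, t)) y < al) Y_compact)
    as [m [Hm Hnear]].
  - intros y r r' Hr Q t Ht Ht1; apply Q; lra.
  - intros w.
    destruct (H_cont (w, 0) ltac:(unfold unit_interval; simpl; lra) (al / 2) ltac:(lra))
      as [dl [Hdl Hclose]].
    rewrite H_start in Hclose.
    assert (close : forall y t, d w y < dl -> 0 <= t < dl -> t <= 1 -> d w (H (y, t)) < al / 2).
    { intros y t Hy Ht Ht1; apply Hclose; [unfold unit_interval; simpl; lra|].
      apply rho_lt; [exact Hy | apply Rabs_def1; lra]. }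
    exists dl; split; [exact Hdl|]; intros y Hy t Ht Ht1.
    pose proof (close y t Hy Ht Ht1); pose proof (close y 0 Hy ltac:(lra) ltac:(lra)).
    rewrite H_start in *; pose proof (d_tri (H (y, t)) w y); rewrite (d_sym (H (y, t)) w) in *; lra.
  - exists (Rmin (m / 2) 1); split; [split; [apply Rmin_pos | apply Rmin_r]; lra|].
    intros y t Ht; pose proof (Rmin_l (m / 2) 1); pose proof (Rmin_r (m / 2) 1).
    apply Hnear; lra.
Qed.

Variable A : Y -> Prop.
Hypothesis A_closed : Defs.closed_set d A.
Hypothesis H_avoids : forall y t, 0 < t <= 1 -> ~ A (H (y, t)).

(* After any positive time a, the homotopy stays uniformly away from A;
   first uniformly in t in [a,1] near a fixed y, then uniformly in y. *)
Lemma homotopy_avoids_uniformly (a : R) : 0 < a <= 1 ->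
  exists eta, 0 < eta /\ forall y t z, a <= t <= 1 -> A z -> eta <= d (H (y, t)) z.
Proof.
  intros Ha.
  assert (local : forall y, exists m, 0 < m /\ forall y', d y y' < m ->
            forall t z, a <= t <= 1 -> A z -> m <= d (H (y', t)) z).
  { intros y.
    destruct (compact_uniform_radius _ (interval_dist a 1) (interval_dist_self a 1)
      (interval_dist_triangle a 1)
      (fun t m => forall y', d y y' < m -> forall z, A z -> m <= d (H (y', proj1_sig t)) z)
      (interval_compact a 1)) as [m [Hm Hall]].
    - intros t m m' Hm' Q y' Hy' z Az; pose proof (Q y' ltac:(lra) z Az); lra.
    - intros [t0 Ht0].
      destruct (A_closed (H (y, t0)) (H_avoids y t0 ltac:(lra))) as [r [Hr Hball]].
      destruct (H_cont (y, t0) ltac:(unfold unit_interval; simpl; lra) (r / 2) ltac:(lra))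
        as [dl [Hdl Hclose]].
      exists (Rmin dl (r / 2)); split; [apply Rmin_pos; lra|].
      intros [t Ht] Htt y' Hy' z Az; unfold interval_dist in Htt; simpl in *.
      pose proof (Rmin_l dl (r / 2)); pose proof (Rmin_r dl (r / 2)).
      assert (Hmove : d (H (y, t0)) (H (y', t)) < r / 2).
      { apply Hclose; [unfold unit_interval; simpl; lra | apply rho_lt; lra]. }
      assert (Hfar : r <= d (H (y, t0)) z).
      { apply Rnot_lt_le; intros Hlt; exact (Hball z Hlt Az). }
      pose proof (d_tri (H (y, t0)) (H (y', t)) z); lra.
    - exists m; split; [exact Hm|]; intros y' Hy' t z Ht Az.
      exact (Hall (exist _ t Ht) y' Hy' z Az). }
  destruct (compact_uniform_radius Y d d_self d_tri
    (fun y m => forall t z, a <= t <= 1 -> A z -> m <= d (H (y, t)) z) Y_compact)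
    as [eta [Heta Hall]].
  - intros y r r' Hr Q t z Ht Az; pose proof (Q t z Ht Az); lra.
  - exact local.
  - exists eta; split; [exact Heta | exact Hall].
Qed.

Lemma levels_separate (a : R) : 0 < a <= 1 ->
  exists b g, 0 < b <= a /\ 0 < g /\ separated d A H b a g.
Proof.
  intros Ha.
  destruct (homotopy_avoids_uniformly a Ha) as [eta [Heta Hfar]].
  destruct (homotopy_near_identity (eta / 2) ltac:(lra)) as [tau [Htau Hnear]].
  exists (Rmin tau a), (eta / 2).
  split; [split; [apply Rmin_pos; lra | apply Rmin_r]|]; split; [lra|].
  intros z y t t' Az Ht Ht'.
  pose proof (Hfar y t' z Ht' Az).
  assert (d (H (z, t)) z < eta / 2) by (apply Hnear; pose proof (Rmin_l tau a); lra).
  pose proof (d_tri (H (y, t')) (H (z, t)) z); rewrite (d_sym (H (y, t')) (H (z, t))) in *; lra.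
Qed.
End Homotopy.

Lemma antitone_chain (tau : R) (P : R -> R -> R -> Prop) :
  0 < tau ->
  (forall lo hi g g', 0 < g' <= g -> P lo hi g -> P lo hi g') ->
  (forall a, 0 < a <= tau -> exists b g, 0 < b <= a /\ 0 < g /\ P b a g) ->
  forall n, exists (c : nat -> R) (g : R), 0 < g /\ c O = tau /\
    (forall m, 0 < c m <= tau) /\ (forall m, c (S m) <= c m) /\
    (forall m, (m < n)%nat -> P (c (S m)) (c m) g).
Proof.
  intros Htau Hmono Hstep; induction n as [|n IH].
  - exists (fun _ => tau), 1; split; [lra | split; [reflexivity|]].
    split; [intros m; lra|]; split; [intros m; lra|]; intros m Hm; lia.
  - destruct IH as [c [g [Hg [Hc0 [Hrange [Hanti Hsep]]]]]].
    destruct (Hstep (c n) (Hrange n)) as [b [g' [Hb [Hg' Hbn]]]].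
    pose proof (Hrange n).
    exists (fun m => if Compare_dec.le_lt_dec m n then c m else b), (Rmin g g').
    split; [apply Rmin_pos; assumption|]; split; [|split; [|split]].
    + destruct (Compare_dec.le_lt_dec 0 n); [exact Hc0 | lia].
    + intros m; destruct (Compare_dec.le_lt_dec m n); [apply Hrange | lra].
    + intros m; destruct (Compare_dec.le_lt_dec (S m) n), (Compare_dec.le_lt_dec m n);
        try lia; try lra; [apply Hanti|].
      replace m with n by lia; lra.
    + intros m Hm; pose proof (Rmin_l g g'); pose proof (Rmin_r g g').
      destruct (Compare_dec.le_lt_dec (S m) n), (Compare_dec.le_lt_dec m n); try lia.
      * apply (Hmono _ _ g); [split; [apply Rmin_pos|]; lra | apply Hsep; lia].
      * replace m with n by lia.
        apply (Hmono _ _ g'); [split; [apply Rmin_pos|]; lra | exact Hbn].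
Qed.

Definition clamp01 (x : R) : R := Rmax 0 (Rmin 1 x).

Lemma clamp01_range (x : R) : 0 <= clamp01 x <= 1.
Proof. unfold clamp01, Rmax, Rmin; repeat destruct Rle_dec; lra. Qed.

Lemma clamp01_above (x : R) : 1 <= x -> clamp01 x = 1.
Proof. intros; unfold clamp01, Rmax, Rmin; repeat destruct Rle_dec; lra. Qed.

Lemma clamp01_below (x : R) : x <= 0 -> clamp01 x = 0.
Proof. intros; unfold clamp01, Rmax, Rmin; repeat destruct Rle_dec; lra. Qed.

Lemma clamp01_lipschitz (x y : R) : Rabs (clamp01 x - clamp01 y) <= Rabs (x - y).
Proof. unfold clamp01, Rmax, Rmin; repeat destruct Rle_dec; split_Rabs; lra. Qed.

(* interp c k is the piecewise-linear function of v >= 0 with value c j at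
   the integer j <= k, constant equal to c k on [k, +oo). *)
Fixpoint interp (c : nat -> R) (k : nat) (v : R) : R :=
  match k with
  | O => c O
  | S k' => interp c k' v - (c k' - c (S k')) * clamp01 (v - INR k')
  end.

Lemma nat_floor (N : nat) (x : R) : 0 <= x < INR N -> exists k : nat, INR k <= x < INR k + 1.
Proof.
  revert x; induction N as [|N IH]; intros x Hx; [simpl in Hx; lra|].
  rewrite S_INR in Hx; destruct (Rlt_dec x (INR N)); [apply IH; lra | exists N; lra].
Qed.

Section Interpolation.
Variable c : nat -> R.
Hypothesis c_antitone : forall m, c (S m) <= c m.

Lemma interp_range (k : nat) (v : R) : c k <= interp c k v <= c O.
Proof.
  induction k as [|k IH]; simpl; [lra|].
  pose proof (c_antitone k); pose proof (clamp01_range (v - INR k)); nra.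
Qed.

Lemma interp_at_level (j : nat) (v : R) : INR j <= v -> interp c j v = c j.
Proof.
  induction j as [|j IH]; intros Hv; simpl; [reflexivity|].
  rewrite S_INR in Hv; rewrite IH by (pose proof (pos_INR j); lra).
  rewrite clamp01_above by lra; ring.
Qed.

Lemma interp_antitone (j i : nat) (v : R) : interp c (j + i) v <= interp c j v.
Proof.
  induction i as [|i IH]; [rewrite Nat.add_0_r; lra|].
  rewrite Nat.add_succ_r; simpl.
  pose proof (c_antitone (j + i)); pose proof (clamp01_range (v - INR (j + i))); nra.
Qed.

Lemma interp_frozen (m i : nat) (v : R) : v <= INR m -> interp c (m + i) v = interp c m v.
Proof.
  intros Hv; induction i as [|i IH]; [rewrite Nat.add_0_r; reflexivity|].
  rewrite Nat.add_succ_r; simpl; rewrite IH.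
  assert (INR m <= INR (m + i)) by (apply le_INR; lia).
  rewrite clamp01_below by lra; ring.
Qed.

Lemma interp_lipschitz (k : nat) (v v' : R) :
  Rabs (interp c k v - interp c k v') <= (c O - c k) * Rabs (v - v').
Proof.
  induction k as [|k IH]; simpl.
  - replace (c O - c O) with 0 by ring; rewrite Rabs_R0; lra.
  - pose proof (c_antitone k) as Hk.
    pose proof (clamp01_lipschitz (v - INR k) (v' - INR k)) as Hcl.
    replace (v - INR k - (v' - INR k)) with (v - v') in Hcl by ring.
    set (Di := interp c k v - interp c k v') in *.
    set (Dc := clamp01 (v - INR k) - clamp01 (v' - INR k)) in *.
    replace (_ - _ - _) with (Di + - ((c k - c (S k)) * Dc)) by (unfold Di, Dc; ring).
    pose proof (Rabs_triang Di (- ((c k - c (S k)) * Dc))) as T.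
    rewrite Rabs_Ropp, Rabs_mult, (Rabs_right (c k - c (S k))) in T by lra.
    pose proof (Rabs_pos (v - v')).
    assert ((c k - c (S k)) * Rabs Dc <= (c k - c (S k)) * Rabs (v - v'))
      by (apply Rmult_le_compat_l; lra).
    nra.
Qed.

Lemma interp_below_level (n j : nat) (v : R) :
  (j <= n)%nat -> INR j <= v -> interp c n v <= c j.
Proof.
  intros Hjn Hv; replace n with (j + (n - j))%nat by lia.
  rewrite <- (interp_at_level j v Hv); apply interp_antitone.
Qed.

Lemma interp_above_level (n m : nat) (v : R) :
  (m <= n)%nat -> v <= INR m -> c m <= interp c n v.
Proof.
  intros Hmn Hv; replace n with (m + (n - m))%nat by lia.
  rewrite interp_frozen by exact Hv; apply interp_range.
Qed.

Lemma interp_scaled_lipschitz (n : nat) (s s' : R) : 0 <= c n -> c O <= 1 ->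
  Rabs (interp c n (INR n * s) - interp c n (INR n * s')) <= INR n * Rabs (s - s').
Proof.
  intros Hcn Hc0; eapply Rle_trans; [apply interp_lipschitz|].
  rewrite <- Rmult_minus_distr_l, Rabs_mult, (Rabs_right (INR n)) by (apply Rle_ge, pos_INR).
  assert (0 <= INR n * Rabs (s - s')) by (apply Rmult_le_pos; [apply pos_INR | apply Rabs_pos]).
  nra.
Qed.

Lemma interp_two_levels (n : nat) (v v' : R) :
  0 <= v' -> v' + 2 < v -> v <= INR n ->
  exists k, (S k < n)%nat /\ interp c n v <= c (S (S k)) /\ c (S k) <= interp c n v'.
Proof.
  intros Hv' Hgap Hvn.
  destruct (nat_floor (S n) v') as [k [Hk1 Hk2]]; [rewrite S_INR; lra|].
  assert (Hkn : (S (S k) <= n)%nat).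
  { destruct (Compare_dec.le_lt_dec (S (S k)) n) as [| Hlt]; [assumption|].
    apply lt_INR in Hlt; rewrite !S_INR in Hlt; lra. }
  exists k; split; [lia|]; split.
  - apply interp_below_level; [exact Hkn | rewrite !S_INR; lra].
  - apply interp_above_level; [lia | rewrite S_INR; lra].
Qed.
End Interpolation.

Lemma reparametrized_continuous (Y : Type) (d : Y -> Y -> R) (H : Y * R -> Y)
  (phi : R -> R) (L : R) (D : Y * R -> Prop) :
  0 <= L ->
  continuous_on (rho d) d (fun p => unit_interval (snd p)) H ->
  (forall s, unit_interval (phi s)) ->
  (forall s s', Rabs (phi s - phi s') <= L * Rabs (s - s')) ->
  continuous_on (rho d) d D (fun p => H (fst p, phi (snd p))).
Proof.
  intros HL H_cont Hphi Hlip [z s] _ e He.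
  destruct (H_cont (z, phi s) (Hphi s) e He) as [dl [Hdl Hclose]].
  set (k := / (L + 1)).
  assert (Hk : 0 < k) by (apply Rinv_0_lt_compat; lra).
  assert (Hk1 : k * (L + 1) = 1) by (apply Rinv_l; lra).
  exists (dl * k); split; [nra|]; intros [z' s'] _ Hr; simpl.
  apply Hclose; [apply Hphi|].
  set (r := rho d (z, s) (z', s')) in Hr.
  assert (Hd : d z z' <= r) by apply Rmax_l.
  assert (Hs : Rabs (s - s') <= r) by apply Rmax_r.
  pose proof (Rabs_pos (s - s')); pose proof (Hlip s s').
  assert (r * (L + 1) < dl) by nra.
  apply rho_lt; nra.
Qed.

Lemma delta_eps_map_of_control (Y : Type) (d : Y -> Y -> R) (D : Y * R -> Prop)
  (F : Y * R -> Y) (eps g : R) :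
  is_metric d -> 0 < g ->
  (forall p, D p -> d (F p) (fst p) < eps / 4) ->
  (forall p q, D p -> D q -> eps < Rabs (snd p - snd q) -> g <= d (F p) (F q)) ->
  delta_eps_map (rho d) d D F (Rmin (eps / 2) (g / 2)) eps.
Proof.
  intros [_ [_ [d_sym d_tri]]] Hg Hnear Hsep S HS p q Dp Dq Sp Sq.
  pose proof (HS _ _ Sp Sq) as Hpq.
  pose proof (Rmin_l (eps / 2) (g / 2)); pose proof (Rmin_r (eps / 2) (g / 2)).
  unfold rho; apply Rmax_lub.
  - pose proof (Hnear p Dp); pose proof (Hnear q Dq).
    pose proof (d_tri (fst p) (F p) (fst q)); pose proof (d_tri (F p) (F q) (fst q)).
    rewrite (d_sym (fst p) (F p)) in *; lra.
  - apply Rnot_lt_le; intros Hlt; pose proof (Hsep p q Dp Dq Hlt); lra.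
Qed.

Lemma rescaled_levels_separate (Y : Type) (d : Y -> Y -> R) (A : Y -> Prop)
  (H : Y * R -> Y) (c : nat -> R) (n : nat) (g eps : R) :
  is_metric d ->
  (forall m, c (S m) <= c m) -> (forall m, 0 < c m) -> c O <= 1 ->
  (forall m, (m < n)%nat -> separated d A H (c (S m)) (c m) g) ->
  2 < INR n * eps ->
  forall z z' s s', A z -> A z' -> 0 <= s <= 1 -> 0 <= s' <= 1 -> eps < Rabs (s - s') ->
  g <= d (H (z, interp c n (INR n * s))) (H (z', interp c n (INR n * s'))).
Proof.
  intros [_ [_ [d_sym _]]] Hanti Hpos Hc0 Hgap Hn.
  pose proof (pos_INR n).
  assert (oriented : forall z z' s s', A z -> 0 <= s' -> s <= 1 -> eps < s - s' ->
            g <= d (H (z, interp c n (INR n * s))) (H (z', interp c n (INR n * s')))).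
  { intros z z' s s' Az Hs' Hs Hss.
    destruct (interp_two_levels c Hanti n (INR n * s) (INR n * s'))
      as [k [Hk [Hlo Hhi]]]; [nra | nra | nra |].
    apply (Hgap (S k) Hk z z' _ _ Az); split; try assumption.
    - pose proof (interp_range c Hanti n (INR n * s)); pose proof (Hpos n); lra.
    - pose proof (interp_range c Hanti n (INR n * s')); lra. }
  intros z z' s s' Az Az' Hs Hs' Hss.
  destruct (Rcase_abs (s - s')) as [Hneg | Hnonneg].
  - rewrite Rabs_left in Hss by exact Hneg.
    rewrite d_sym; apply oriented; [exact Az' | lra | lra | lra].
  - rewrite Rabs_right in Hss by exact Hnonneg.
    apply oriented; [exact Az | lra | lra | lra].
Qed.

Theorem mainTheorem4 (Y : Type) (d : Y -> Y -> R) (A : Y -> Prop) :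
  ANR d -> compact_space d -> Z_set d A ->
  forall eps, 0 < eps ->
  exists (delta' : R) (F : Y * R -> Y),
    0 < delta' /\
    continuous_on (rho d) d (fun p => A (fst p) /\ unit_interval (snd p)) F /\
    delta_eps_map (rho d) d (fun p => A (fst p) /\ unit_interval (snd p)) F delta' eps.
Proof.
  intros [Hd _] Hc [HA_closed [H [H_cont [H_start H_avoids]]]] eps Heps.
  destruct (homotopy_near_identity Y d H Hd Hc H_cont H_start (eps / 4) ltac:(lra))
    as [tau [Htau Hnear]].
  destruct (archimed_cor1 (eps / 2) ltac:(lra)) as [n [Hn Hn0]].
  assert (Hn_large : 2 < INR n * eps).
  { apply lt_0_INR in Hn0; apply (Rmult_lt_compat_l (INR n)) in Hn; [|lra].
    rewrite Rinv_r in Hn by lra; lra. }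
  destruct (antitone_chain tau (separated d A H) ltac:(lra)
    (fun lo hi g g' Hg' => separated_weaken d A H lo hi g g' (proj2 Hg'))
    (fun a Ha => levels_separate Y d H Hd Hc H_cont H_start A HA_closed H_avoids a ltac:(lra)) n)
    as [c [g [Hg [Hc0 [Hrange [Hanti Hgap]]]]]].
  set (phi := fun s => interp c n (INR n * s)).
  assert (Hphi : forall s, 0 <= phi s <= tau).
  { intros s; pose proof (interp_range c Hanti n (INR n * s)); pose proof (Hrange n).
    unfold phi; lra. }
  exists (Rmin (eps / 2) (g / 2)), (fun p => H (fst p, phi (snd p))).
  split; [apply Rmin_pos; lra | split].
  - apply (reparametrized_continuous Y d H phi (INR n)); [apply pos_INR | exact H_cont | |].
    + intros s; unfold unit_interval; pose proof (Hphi s); lra.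
    + intros s s'; apply interp_scaled_lipschitz; [exact Hanti | pose proof (Hrange n) | ]; lra.
  - apply delta_eps_map_of_control; [exact Hd | exact Hg | |].
    + intros [z s] _; apply Hnear, Hphi.
    + intros [z s] [z' s'] [Az Hs] [Az' Hs'];
        exact (rescaled_levels_separate Y d A H c n g eps Hd Hanti
                 (fun m => proj1 (Hrange m)) ltac:(lra) Hgap Hn_large z z' s s' Az Az' Hs Hs').
Qed.
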